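(* Let $A$ be a profile and $k$ a committee size such that $|A_i|\le 2$ for all $i\in N_A$ and $|N_A(c)|=|N_A(d)|\le n/k$ for all $c,d\in C$. Then the method of equal shares (with Phase 2 as described) and sequential Phragmén select exactly the same sets of valid candidate sequences on $(A,k)$; in particular they return the same set of winning committees.
   Context: Candidates form a finite set $C$, $|C|=m>1$. An approval profile $A$ has a nonempty finite voter set $N_A$, each $i\in N_A$ having a nonempty ballot $A_i\subseteq C$; $N_A(c)=\{i\in N_A:c\in A_i\}$, $n=|N_A|$. Both rules add candidates one at a time and return all committees obtainable under some tie-breaking. Sequential Phragmén: every voter's budget starts at 0 and increases continuously at unit rate; as soon as the supporters $N_A(c)$ of some unchosen candidate $c$ have total budget 1, such a $c$ (any, in case of ties) is bought and its supporters' budgets are reset to 0; continue until $k$ candidates are bought. Method of equal shares: each voter starts with budget $x_0(i)=k/n$; every candidate costs 1. Phase 1: with budgets $x_r$ after buying $r$ candidates, let $C_r$ be the unchosen candidates $c$ with $\sum_{i\in N_A(c)}x_r(i)\ge1$; if $C_r\neq\emptyset$, buy any $c\in C_r$ minimizing $\rho(c)$, where $\sum_{i\in N_A(c)}\min(\rho(c),x_r(i))=1$, and set $x_{r+1}(i)=x_r(i)-\min(\rho(c),x_r(i))$ for $i\in N_A(c)$, $x_{r+1}(i)=x_r(i)$ otherwise; stop when $C_r=\emptyset$. Phase 2 (if fewer than $k$ bought): run the sequential Phragmén process above, but with voters starting from their remaining Phase 1 budgets instead of 0. *)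

From HB Require Import structures.
From mathcomp Require Import all_boot all_order all_algebra.
From mathcomp Require Import reals.
Set Implicit Arguments. Unset Strict Implicit. Unset Printing Implicit Defensive.
Import Order.TTheory GRing.Theory Num.Theory.
Local Open Scope ring_scope.

Section Rules.
Variables (R : realType) (C V : finType) (A : V -> {set C}) (k : nat).

Definition supp (c : C) : {set V} := [set i | c \in A i].

Definition suppsum (b : V -> R) (c : C) : R := \sum_(i in supp c) b i.

(* One purchase of candidate c at (relative) time t from budgets b, when the
   candidates in W are already bought: the supporters of c reach total budget
   exactly 1 at time t, and no unchosen candidate reached total budget 1 at an
   earlier time t' in [0, t).  Ties (several candidates reaching 1 at time t)
   are resolved arbitrarily. *)
Definition phr_step (b : V -> R) (W : seq C) (c : C) (t : R) : Prop :=
  [/\ c \notin W, 0 <= t,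
      \sum_(i in supp c) (b i + t) = 1 &
      forall d, d \notin W -> forall t', 0 <= t' -> t' < t ->
        \sum_(i in supp d) (b i + t') < 1].

Definition phr_update (b : V -> R) (c : C) (t : R) : V -> R :=
  fun i => if c \in A i then 0 else b i + t.

Fixpoint phr_from (b : V -> R) (W : seq C) (s : seq C) : Prop :=
  match s with
  | [::] => True
  | c :: s' => exists t, phr_step b W c t /\
                        phr_from (phr_update b c t) (c :: W) s'
  end.

Definition phragmen_seq (s : seq C) : Prop :=
  size s = k /\ phr_from (fun _ => 0) [::] s.

Definition mes_x0 : V -> R := fun _ => k%:R / #|V|%:R.

Definition is_rho (x : V -> R) (c : C) (rho : R) : Prop :=
  \sum_(i in supp c) Num.min rho (x i) = 1 /\
  forall r, \sum_(i in supp c) Num.min r (x i) = 1 -> rho <= r.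

Definition affordable (x : V -> R) (W : seq C) (c : C) : Prop :=
  c \notin W /\ 1 <= suppsum x c.

Definition mes_step (x : V -> R) (W : seq C) (c : C) (rho : R) : Prop :=
  [/\ affordable x W c, is_rho x c rho &
      forall d rd, affordable x W d -> is_rho x d rd -> rho <= rd].

Definition mes_update (x : V -> R) (c : C) (rho : R) : V -> R :=
  fun i => if c \in A i then x i - Num.min rho (x i) else x i.

Fixpoint mes1_from (x : V -> R) (W : seq C) (s : seq C)
    (P : (V -> R) -> seq C -> Prop) : Prop :=
  match s with
  | [::] => P x W
  | c :: s' => exists rho, mes_step x W c rho /\
                          mes1_from (mes_update x c rho) (c :: W) s' P
  end.

Definition mes_seq (s : seq C) : Prop :=
  size s = k /\
  exists s1 s2, s = s1 ++ s2 /\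
    mes1_from mes_x0 [::] s1
      (fun x W => size s1 = k \/
         ((forall d, ~ affordable x W d) /\ phr_from x W s2)).

End Rules.

(* When every candidate has exactly q supporters, no voter ever holds more
   than 1/q: this holds initially since k/n <= 1/q, and both rules only reset
   budgets to 0 or advance them while nobody can afford a candidate.  With
   budgets capped at 1/q, a candidate is affordable exactly when all its
   supporters hold 1/q, and then its price per voter is 1/q.  So a Phase 1
   purchase of equal shares is a Phragmen purchase at time 0, and conversely
   Phragmen buys at time 0 while some candidate is affordable.  Once nobody
   can afford a candidate both rules continue with Phragmen.  Finally,
   Phragmen from constant budgets is a time shift of Phragmen from 0. *)
From HB Require Import structures.
From mathcomp Require Import all_boot all_order all_algebra.
From mathcomp Require Import reals.
From mathcomp Require Import boolp.
Import Order.TTheory GRing.Theory Num.Theory.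
Local Open Scope ring_scope.
Set Implicit Arguments. Unset Strict Implicit.

Section EqualSupport.
Variables (R : realType) (C V : finType) (A : V -> {set C}) (q : nat).
Hypothesis card_supp : forall d, #|supp A d| = q.
Hypothesis q_gt0 : (0 < q)%N.

Let share : R := q%:R^-1.

Lemma share_ge0 : 0 <= share.
Proof. by rewrite invr_ge0 ler0n. Qed.

Lemma mul_share : q%:R * share = 1.
Proof. by rewrite mulfV // pnatr_eq0 -lt0n. Qed.

Lemma mulq_eq1 (r : R) : q%:R * r = 1 <-> r = share.
Proof.
split=> [h|->]; last exact: mul_share.
have q_neq0 : q%:R != 0 :> R by rewrite pnatr_eq0 -lt0n.
by apply: (mulfI q_neq0); rewrite h mul_share.
Qed.

Lemma sum_supp_cst d (r : R) : \sum_(i in supp A d) r = q%:R * r.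
Proof. by rewrite sumr_const card_supp mulr_natl. Qed.

Definition capped (x : V -> R) := forall i, x i <= share.

Definition full (x : V -> R) d := forall i, i \in supp A d -> x i = share.

Lemma capped_phr_update0 (x : V -> R) c :
  capped x -> capped (phr_update A x c 0).
Proof.
by move=> hx i; rewrite /phr_update; case: ifP; rewrite ?share_ge0 ?addr0.
Qed.

Lemma suppsum_full (x : V -> R) d : full x d -> suppsum A x d = 1.
Proof.
by move=> hd; rewrite /suppsum (eq_bigr _ hd) sum_supp_cst mul_share.
Qed.

Lemma capped_suppsum_ge1 (x : V -> R) d :
  capped x -> 1 <= suppsum A x d -> full x d.
Proof.
move=> hx hd.
have gap0 : \sum_(i in supp A d) (share - x i) = 0.
  apply/eqP; rewrite eq_le sumr_ge0 ?andbT => [|i _]; last by rewrite subr_ge0.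
  by rewrite sumrB sum_supp_cst mul_share subr_le0.
move=> i hi; apply/eqP; rewrite eq_sym -subr_eq0; apply/eqP.
by apply: (psumr_eq0P _ gap0) => // j _; rewrite subr_ge0.
Qed.

Lemma affordable_full (x : V -> R) W c :
  capped x -> affordable A x W c -> full x c.
Proof. by move=> hx [_ /(capped_suppsum_ge1 hx)]. Qed.

Lemma is_rho_fullE x d rho : full x d -> is_rho A x d rho <-> rho = share.
Proof.
move=> hd.
have min_sum r : \sum_(i in supp A d) Num.min r (x i) = q%:R * Num.min r share.
  by rewrite -(sum_supp_cst d); apply: eq_bigr => i hi; rewrite hd.
have solves r : \sum_(i in supp A d) Num.min r (x i) = 1 -> share <= r.
  by rewrite min_sum => /mulq_eq1 <-; rewrite ge_min lexx.
have share_solves : \sum_(i in supp A d) Num.min share (x i) = 1.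
  by rewrite min_sum minxx mul_share.
split=> [[/solves h1 /(_ _ share_solves) h2]|->]; last by split=> // r /solves.
by apply/eqP; rewrite eq_le h1 h2.
Qed.

Lemma mes_stepE x W c rho : capped x ->
  mes_step A x W c rho <-> affordable A x W c /\ rho = share.
Proof.
move=> hx; split=> [[hc /(is_rho_fullE _ (affordable_full hx hc))] //|].
case=> hc ->; split=> //; first exact/(is_rho_fullE _ (affordable_full hx hc)).
by move=> d rd /(affordable_full hx) hd /(is_rho_fullE _ hd) ->.
Qed.

Lemma mes_update_full (x : V -> R) c :
  full x c -> mes_update A x c share = phr_update A x c 0.
Proof.
move=> hc; apply: funext => i; rewrite /mes_update /phr_update.
by case: ifP => hi; rewrite ?addr0 // hc ?minxx ?subrr // inE.
Qed.

Lemma sum_supp_add0 (x : V -> R) d :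
  \sum_(i in supp A d) (x i + 0) = suppsum A x d.
Proof. by apply: eq_bigr => i _; rewrite addr0. Qed.

Lemma phr_step_affordableE x W c t :
  capped x -> (exists d, affordable A x W d) ->
  phr_step A x W c t <-> affordable A x W c /\ t = 0.
Proof.
move=> hx [d [hdW hd]]; split.
  case=> hcW t_ge0 hsum t_min.
  have t0 : t = 0.
    apply/eqP; rewrite eq_le t_ge0 andbT leNgt; apply/negP.
    by move=> /(t_min d hdW 0 (lexx _)); rewrite sum_supp_add0 ltNge hd.
  move: hsum; rewrite t0 sum_supp_add0 => hsum.
  by do 2 split=> //; rewrite hsum.
case=> hc ->; split; [by case: hc | exact: lexx | |].
- by rewrite sum_supp_add0 (suppsum_full (affordable_full hx hc)).
- by move=> e _ t' t'_ge0 /(le_lt_trans t'_ge0); rewrite ltxx.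
Qed.

Lemma affordable_dec (x : V -> R) W :
  (exists d, affordable A x W d) \/ forall d, ~ affordable A x W d.
Proof.
case: (boolP [exists d, (d \notin W) && (1 <= suppsum A x d)]).
  by case/existsP=> d /andP hd; left; exists d.
rewrite negb_exists => /forallP hn; right=> d [hdW hd].
by move: (hn d); rewrite hdW hd.
Qed.

(* Phase 2 of equal shares, run on the state reached after Phase 1;
   [s2 = [::]] covers a Phase 1 that stopped because the committee is full. *)
Definition phase2 (s2 : seq C) (x : V -> R) (W : seq C) : Prop :=
  s2 = [::] \/ ((forall d, ~ affordable A x W d) /\ phr_from A x W s2).

Lemma mes1_from_mono (x : V -> R) W s1 (P Q : (V -> R) -> seq C -> Prop) :
  (forall x W, P x W -> Q x W) -> mes1_from A x W s1 P -> mes1_from A x W s1 Q.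
Proof.
move=> hPQ; elim: s1 x W => [|c s1 IH] x W /=; first exact: hPQ.
by case=> rho [hstep hrest]; exists rho; split=> //; apply: IH.
Qed.

Lemma phr_from_capped (x : V -> R) W s : capped x ->
  phr_from A x W s <->
  exists s1 s2, s = s1 ++ s2 /\ mes1_from A x W s1 (phase2 s2).
Proof.
move=> hx; split.
  elim: s x W hx => [|c s IH] x W hx /=.
    by exists [::], [::]; split=> //; left.
  case=> t [hstep hrest].
  case: (affordable_dec x W) => [haff|hnone]; last first.
    by exists [::], (c :: s); split=> //; right; split=> //; exists t.
  have [hc t0] := (phr_step_affordableE _ _ hx haff).1 hstep.
  rewrite t0 in hrest.
  have [s1 [s2 [-> hm]]] := IH _ _ (capped_phr_update0 c hx) hrest.
  exists (c :: s1), s2; split=> //; exists share; split; first exact/mes_stepE.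
  by rewrite (mes_update_full (affordable_full hx hc)).
case=> s1 [s2 [-> hm]].
elim: s1 x W hx hm => [|c s1 IH] x W hx /=; first by case=> [->|[]].
case=> rho [/(mes_stepE _ _ _ hx) [hc ->]].
rewrite (mes_update_full (affordable_full hx hc)) => hrest.
exists 0; split; first by apply/phr_step_affordableE => //; exists c.
exact: IH (capped_phr_update0 c hx) hrest.
Qed.

Lemma phr_step_cstE (delta : R) c t : delta <= share ->
  phr_step A (fun _ => delta) [::] c t <-> t = share - delta.
Proof.
move=> hdelta; rewrite /phr_step sum_supp_cst.
have reach1 : (q%:R * (delta + t) = 1) <-> t = share - delta.
  by rewrite mulq_eq1; split=> [<-|->]; rewrite addrC ?addKr ?subrK.
split=> [[_ _ /reach1] //|ht]; have hsum := proj2 reach1 ht.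
split=> //; first by rewrite ht subr_ge0.
move=> d _ t' _ t'_lt.
by rewrite sum_supp_cst -[X in _ < X]hsum ltr_pM2l ?ltr0n // ltrD2l.
Qed.

Lemma phr_from_cst (delta : R) s : delta <= share ->
  phr_from A (fun _ => delta) [::] s <-> phr_from A (fun _ => 0 : R) [::] s.
Proof.
move=> hdelta; case: s => [|c s] //=.
have same_update : phr_update A (fun _ => delta) c (share - delta) =
                   phr_update A (fun _ => 0 : R) c share.
  by apply: funext => i; rewrite /phr_update add0r addrC subrK.
split=> [[t [/(phr_step_cstE _ _ hdelta) -> hrest]]|[t [hstep hrest]]].
  exists share; split; last by rewrite -same_update.
  by apply/phr_step_cstE; rewrite ?share_ge0 ?subr0.
move/(phr_step_cstE _ _ share_ge0): hstep; rewrite subr0 => ht.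
exists (share - delta); split; first exact/phr_step_cstE.
by rewrite same_update -ht.
Qed.

End EqualSupport.

Theorem mainTheorem6 (R : realType) (C V : finType) (A : V -> {set C}) (k : nat) :
  (1 < #|C|)%N ->
  (0 < #|V|)%N ->
  (forall i : V, A i != set0) ->
  (forall i : V, #|A i| <= 2)%N ->
  (forall c d : C, #|supp A c| = #|supp A d|) ->
  (forall c : C, #|supp A c| * k <= #|V|)%N ->
  (forall s : seq C, mes_seq R A k s <-> phragmen_seq R A k s) /\
  (forall S : {set C},
     (exists2 s, mes_seq R A k s & S = [set x in s]) <->
     (exists2 s, phragmen_seq R A k s & S = [set x in s])).
Proof.
move=> /ltnW/card_gt0P [c0 _] V_gt0 A_nonempty _ eq_supp supp_k.
set q := #|supp A c0|.
have card_supp d : #|supp A d| = q by exact: eq_supp.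
have q_gt0 : (0 < q)%N.
  case/card_gt0P: V_gt0 => i _; case/set0Pn: (A_nonempty i) => c hc.
  by rewrite -(card_supp c); apply/card_gt0P; exists i; rewrite inE.
have x0_capped : k%:R / #|V|%:R <= q%:R^-1 :> R.
  rewrite ler_pdivrMr ?ltr0n // mulrC ler_pdivlMr ?ltr0n //.
  by rewrite -natrM ler_nat mulnC supp_k.
have same_seq s : mes_seq R A k s <-> phragmen_seq R A k s.
  rewrite /mes_seq /phragmen_seq -(phr_from_cst card_supp q_gt0 _ x0_capped).
  rewrite (phr_from_capped card_supp q_gt0 _ _ (fun=> x0_capped)).
  split=> -[size_s [s1 [s2 [e hm]]]]; split=> //; exists s1, s2; split=> //;
    apply: mes1_from_mono hm => x W [stop|]; try by right.
  - left; apply/size0nil/(@addnI (size s1)).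
    by rewrite -size_cat -e size_s stop addn0.
  - by left; rewrite -size_s e stop cats0.
by split=> // S; split=> -[s /same_seq]; exists s.
Qed.
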